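(* Let $s\ge 0$ and $d\ge1$, and let $(\delta_1,\ldots,\delta_s,\delta_{s+1})$ and $(e_1,\ldots,e_s)$ be sequences of integers with $\delta_i\neq e_j$ for all $i,j$, satisfying $0<\delta_1\le\cdots\le\delta_s\le\delta_{s+1}=d$, $0\le e_1\le\cdots\le e_s<d$, and $e_j<\delta_j$ for $1\le j\le s$. Let $n=\sum_{j=1}^{s+1}\delta_j-\sum_{j=1}^{s}e_j$. Then there is a forest $\Delta$ on $[n]$ of dimension $d-1$ whose $f$-vector $(f_0,\ldots,f_{d-1})$ satisfies $$\sum_{i=0}^{d} f_{i-1}x^i=\sum_{j=1}^{s+1}(1+x)^{\delta_j}-\sum_{j=1}^{s}(1+x)^{e_j},$$ where $f_{-1}=1$.
   Context: A simplicial complex $\Delta$ on $[n]$ is a collection of subsets of $[n]$ containing all singletons $\{i\}$, $i\in[n]$, and closed under taking subsets; $\dim\Delta=d-1$ where $d$ is the maximal face size; facets are maximal faces; $f_i$ is the number of faces with $i+1$ elements. For facets $F_{i_1},\ldots,F_{i_q}$, $\langle F_{i_1},\ldots,F_{i_q}\rangle$ is the subcomplex of all faces contained in some $F_{i_j}$. A facet $F$ of a complex is a leaf if there is another facet $G\neq F$ with $H\cap F\subset G\cap F$ for all facets $H\neq F$ (a complex with a single facet is regarded as having that facet as a leaf). A forest is a simplicial complex such that for every nonempty subset $\{F_{i_1},\ldots,F_{i_q}\}$ of its facets, $\langle F_{i_1},\ldots,F_{i_q}\rangle$ has a leaf. *)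

From HB Require Import structures.
From mathcomp Require Import all_boot all_order all_algebra.
Set Implicit Arguments. Unset Strict Implicit. Unset Printing Implicit Defensive.
Import Order.TTheory GRing.Theory Num.Theory.

Definition simplicial_complex (n : nat) (D : {set {set 'I_n}}) : Prop :=
  (forall i : 'I_n, [set i] \in D) /\
  (forall F G : {set 'I_n}, F \in D -> G \subset F -> G \in D).

(* maximal face size d, i.e. dim D = d - 1 *)
Definition max_face_size (n : nat) (D : {set {set 'I_n}}) (d : nat) : Prop :=
  (exists2 F, F \in D & #|F| = d) /\ (forall F, F \in D -> #|F| <= d).

Definition facets (n : nat) (D : {set {set 'I_n}}) : {set {set 'I_n}} :=
  [set F in D | [forall G in D, (F \subset G) ==> (G == F)]].

Definition gen_complex (n : nat) (S : {set {set 'I_n}}) : {set {set 'I_n}} :=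
  [set G : {set 'I_n} | [exists F in S, G \subset F]].

Definition is_leaf (n : nat) (D : {set {set 'I_n}}) (F : {set 'I_n}) : Prop :=
  F \in facets D /\
  (facets D = [set F] \/
   exists2 G, G \in facets D &
     G != F /\ (forall H, H \in facets D -> H != F -> H :&: F \subset G :&: F)).

Definition has_leaf (n : nat) (D : {set {set 'I_n}}) : Prop :=
  exists F, is_leaf D F.

Definition forest (n : nat) (D : {set {set 'I_n}}) : Prop :=
  forall S : {set {set 'I_n}}, S \subset facets D -> S != set0 ->
    has_leaf (gen_complex S).

Definition fnum (n : nat) (D : {set {set 'I_n}}) (i : nat) : nat :=
  #|[set F in D | #|F| == i.+1]|.

(* f_{i-1}, with the convention f_{-1} = 1 *)
Definition fshift (n : nat) (D : {set {set 'I_n}}) (i : nat) : nat :=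
  if i is i'.+1 then fnum D i' else 1.

From HB Require Import structures.
From mathcomp Require Import all_boot all_order all_algebra.
Import Order.TTheory GRing.Theory Num.Theory.
Set Implicit Arguments. Unset Strict Implicit. Unset Printing Implicit Defensive.

(* The complex has a base facet B = [0, d) and, for each j, a facet
   F_j = [0, e_j) ∪ N_j, where N_j is a fresh block of delta_j - e_j vertices.
   Any facet meets F_j inside [0, e_j), so in a subfamily of facets the F_j with
   least e_j is a leaf: [0, e_j) lies in every other member (if only B remains,
   B is a leaf).  A face not contained in B lies in exactly one F_j, and
   F_j ∩ B = [0, e_j); counting subsets of B, F_j and [0, e_j) by size gives
   (1+x)^d + sum_j ((1+x)^delta_j - (1+x)^e_j) as face polynomial. *)

Definition ord_range (n a b : nat) : {set 'I_n} := [set i : 'I_n | a <= i < b].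

Lemma card_ord_range n a b : b <= n -> #|ord_range n a b| = b - a.
Proof.
move=> le_bn; rewrite -sum1dep_card.
rewrite (eq_bigl (fun i : 'I_n => (i < b) && (a <= i))); last by move=> i; rewrite andbC.
rewrite -(big_geq_mkord _ _ (fun i => i < b) (fun _ => 1)).
by rewrite -(big_nat_widen _ _ _ predT) // sum_nat_const_nat muln1.
Qed.

Lemma subset_ord_range n a b a' b' :
  a' <= a -> b <= b' -> ord_range n a b \subset ord_range n a' b'.
Proof.
move=> le_a le_b; apply/subsetP => i; rewrite !inE => /andP[ai ib].
by rewrite (leq_trans le_a ai) (leq_trans ib le_b).
Qed.

Lemma disjoint_ord_range n a b a' b' :
  b <= a' -> [disjoint ord_range n a b & ord_range n a' b'].
Proof.
move=> le_ba; rewrite -setI_eq0; apply/eqP/setP => i; rewrite !inE.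
apply/negbTE/negP => /andP[/andP[_ ib] /andP[a'i _]].
by move: (leq_trans le_ba a'i); rewrite leqNgt ib.
Qed.

Lemma sum_subsets_exp_card (R : comPzSemiRingType) (T : finType) (X : {set T}) (x : R) :
  (\sum_(G : {set T} | G \subset X) x ^+ #|G| = (1 + x) ^+ #|X|)%R.
Proof.
have -> : ((1 + x) ^+ #|X| = \prod_i ((if i \in X then x else 0) + 1))%R.
  rewrite -prodr_const big_mkcond; apply: eq_bigr => i _.
  by case: (i \in X); [rewrite addrC | rewrite add0r].
rewrite bigA_distr big_mkcond; apply: eq_bigr => G _.
have [GX | /subsetPn[i iG iX]] := boolP (G \subset X).
  rewrite -prodr_const big_mkcond; apply: eq_bigr => i _.
  by case: (boolP (i \in G)) => // iG; rewrite (subsetP GX i iG).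
by rewrite (bigD1 i) //= iG (negbTE iX) mul0r.
Qed.

Lemma fshift_card n (D : {set {set 'I_n}}) i :
  set0 \in D -> fshift D i = #|[set F in D | #|F| == i]|.
Proof.
case: i => [D0 | i _] //=.
suff -> : [set F in D | #|F| == 0] = [set set0] by rewrite cards1.
apply/setP => F; rewrite !inE cards_eq0.
by case: (F =P set0) => [-> | _]; rewrite ?D0 ?andbF.
Qed.

Lemma sum_fshift_faces (R : nzRingType) n (D : {set {set 'I_n}}) d :
  set0 \in D -> (forall F, F \in D -> #|F| <= d) ->
  (\sum_(i < d.+1) ((fshift D i)%:R : R) *: 'X^i = \sum_(F in D) 'X^#|F|)%R.
Proof.
move=> D0 D_le_d.
rewrite (partition_big (fun F : {set 'I_n} => inord #|F| : 'I_d.+1) predT) //=.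
apply: eq_bigr => i _; rewrite fshift_card // scaler_nat -sumr_const.
apply: eq_big => [F | F]; last by rewrite inE => /andP[_ /eqP ->].
rewrite inE; case: (boolP (F \in D)) => //= FD.
by rewrite -val_eqE /= inordK // ltnS D_le_d.
Qed.

Lemma facets_gen_complex_sub n (S : {set {set 'I_n}}) : facets (gen_complex S) \subset S.
Proof.
apply/subsetP => F; rewrite inE => /andP[FD /forallP F_max].
move: FD; rewrite inE => /existsP[X /andP[XS FX]].
have XD : X \in gen_complex S by rewrite inE; apply/existsP; exists X; rewrite XS subxx.
by move: (F_max X); rewrite XD FX => /eqP <-.
Qed.

Lemma facets_antichain n (D : {set {set 'I_n}}) F G :
  F \in facets D -> G \in facets D -> F \subset G -> F = G.
Proof.
rewrite !inE => /andP[_ /forallP F_max] /andP[GD _] FG.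
by move: (F_max G); rewrite GD FG => /eqP.
Qed.

Lemma facets_gen_complex n (S : {set {set 'I_n}}) :
  {in S &, forall F G : {set 'I_n}, F \subset G -> F = G} -> facets (gen_complex S) = S.
Proof.
move=> S_antichain; apply/eqP; rewrite eqEsubset facets_gen_complex_sub.
apply/subsetP => F FS; rewrite inE; apply/andP; split.
  by rewrite inE; apply/existsP; exists F; rewrite FS subxx.
apply/forall_inP => G; rewrite inE => /existsP[X /andP[XS GX]].
apply/implyP => FG; have FX := S_antichain F X FS XS (subset_trans FG GX).
by rewrite eqEsubset FG FX GX.
Qed.

Lemma is_leaf_core n (D : {set {set 'I_n}}) (F A : {set 'I_n}) :
  F \in facets D ->
  (forall H, H \in facets D -> H != F -> H :&: F \subset A) ->
  (forall G, G \in facets D -> A \subset G) ->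
  is_leaf D F.
Proof.
move=> FD H_core A_sub; split=> //.
have [no_other | [G]] := set_0Vmem (facets D :\ F).
  left; apply/setP => H; rewrite in_set1; apply/idP/idP => [HD | /eqP -> //].
  by apply: contraT => HF; rewrite -(in_set0 H) -no_other in_setD1 HF.
rewrite in_setD1 => /andP[GF GD]; right; exists G => //; split => // H HD HF.
by rewrite subsetI subsetIr andbT (subset_trans (H_core H HD HF)) ?A_sub.
Qed.

Section BlockForest.
Variables (d s : nat) (delta e : nat -> nat).
Hypothesis e_lt_delta : forall j, j < s -> e j < delta j.
Hypothesis delta_le_d : forall j, j < s -> delta j <= d.

Definition block_start j := d + \sum_(k < j) (delta k - e k).
Local Notation n := (block_start s).

Definition base : {set 'I_n} := ord_range n 0 d.
Definition core (j : 'I_s) : {set 'I_n} := ord_range n 0 (e j).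
Definition block (j : 'I_s) : {set 'I_n} :=
  ord_range n (block_start j) (block_start j.+1).
Definition facet (j : 'I_s) : {set 'I_n} := core j :|: block j.
Definition facet_family : {set {set 'I_n}} := base |: [set facet j | j : 'I_s].
Definition block_complex : {set {set 'I_n}} := gen_complex facet_family.

Lemma block_startS j : block_start j.+1 = block_start j + (delta j - e j).
Proof. by rewrite /block_start big_ord_recr addnA. Qed.

Lemma block_start_homo : {homo block_start : j k / j <= k}.
Proof. by apply: homo_leq leqnn leq_trans _ => j; rewrite block_startS leq_addr. Qed.

Lemma d_le_block_start j : d <= block_start j.
Proof. exact: leq_addr. Qed.

Lemma e_le_d (j : 'I_s) : e j <= d.
Proof. exact: ltnW (leq_trans (e_lt_delta (ltn_ord j)) (delta_le_d (ltn_ord j))). Qed.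

Lemma card_base : #|base| = d.
Proof. by rewrite card_ord_range ?subn0 ?d_le_block_start. Qed.

Lemma card_core j : #|core j| = e j.
Proof. by rewrite card_ord_range ?subn0 ?(leq_trans (e_le_d j)) ?d_le_block_start. Qed.

Lemma core_sub_base j : core j \subset base.
Proof. exact: subset_ord_range (e_le_d j). Qed.

Lemma core_sub_facet j : core j \subset facet j.
Proof. exact: subsetUl. Qed.

Lemma subset_core (j k : 'I_s) : e j <= e k -> core j \subset core k.
Proof. exact: subset_ord_range. Qed.

Lemma disjoint_base_block j : [disjoint base & block j].
Proof. exact: disjoint_ord_range (d_le_block_start j). Qed.

Lemma disjoint_core_block j k : [disjoint core j & block k].
Proof. exact: disjointWl (core_sub_base j) (disjoint_base_block k). Qed.

Lemma disjoint_blocks (j k : 'I_s) : j != k -> [disjoint block j & block k].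
Proof.
have disjoint_lt (i l : 'I_s) : i < l -> [disjoint block i & block l].
  by move=> il; apply: disjoint_ord_range (block_start_homo il).
rewrite neq_ltn => /orP[jk | kj]; first exact: disjoint_lt.
by rewrite disjoint_sym; apply: disjoint_lt.
Qed.

Lemma card_facet j : #|facet j| = delta j.
Proof.
have le_ej_delta := ltnW (e_lt_delta (ltn_ord j)).
rewrite cardsU (disjoint_setI0 (disjoint_core_block j j)) cards0 subn0 card_core.
rewrite card_ord_range; last exact: block_start_homo (ltn_ord j).
by rewrite block_startS addKn subnKC.
Qed.

Lemma setI_facet_base j : facet j :&: base = core j.
Proof.
rewrite setIUl (setIidPl (core_sub_base j)) (disjoint_setI0 _) ?setU0 //.
by rewrite disjoint_sym disjoint_base_block.
Qed.

Lemma setI_facets (j k : 'I_s) : k != j -> facet k :&: facet j \subset core j.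
Proof.
move=> kj; apply/subsetP => i; rewrite in_setI !in_setU.
case/andP => /orP[ik | ik] /orP[ij | ij] //.
- by rewrite (disjointFr (disjoint_core_block k j) ik) in ij.
- by rewrite (disjointFr (disjoint_blocks kj) ik) in ij.
Qed.

Lemma facet_familyP X : X \in facet_family -> X = base \/ exists j, X = facet j.
Proof. by rewrite !inE => /orP[/eqP -> | /imsetP[j _ ->]]; [left | right; exists j]. Qed.

Lemma setI_family_facet H j :
  H \in facet_family -> H != facet j -> H :&: facet j \subset core j.
Proof.
case/facet_familyP => [-> _ | [k ->] kj]; first by rewrite setIC setI_facet_base.
by apply: setI_facets; apply: contraNneq kj => ->.
Qed.

Lemma mem_block_complex G :
  (G \in block_complex) = (G \subset base) || [exists j, G \subset facet j].
Proof.
rewrite inE; apply/existsP/orP => [[X /andP[/facet_familyP[-> | [j ->]] GX]] | ].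
- by left.
- by right; apply/existsP; exists j.
case=> [Gbase | /existsP[j Gj]].
  by exists base; rewrite !inE eqxx.
by exists (facet j); rewrite !inE Gj andbT; apply/orP; right; apply: imset_f.
Qed.

Lemma mem_base_or_block (i : 'I_n) : i \in base \/ exists j, i \in block j.
Proof.
rewrite inE; case: (ltnP i d) => [i_lt_d | d_le_i]; [by left | right].
have block_of t : t <= s -> i < block_start t -> exists j : 'I_s, i \in block j.
  elim: t => [_ | t IHt ts]; first by rewrite /block_start big_ord0 addn0 ltnNge d_le_i.
  case: (ltnP i (block_start t)) => [i_lt _ | le_i i_lt]; first exact: IHt (ltnW ts) i_lt.
  by exists (Ordinal ts); rewrite inE le_i.
exact: block_of (leqnn s) (ltn_ord i).
Qed.

Lemma block_complex_simplicial : simplicial_complex block_complex.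
Proof.
split=> [i | F G]; rewrite !mem_block_complex.
  case: (mem_base_or_block i) => [ibase | [j ij]]; first by rewrite sub1set ibase.
  by apply/orP; right; apply/existsP; exists j; rewrite sub1set inE ij orbT.
case/orP=> [Fbase | /existsP[j Fj]] GF; first by rewrite (subset_trans GF Fbase).
by apply/orP; right; apply/existsP; exists j; rewrite (subset_trans GF Fj).
Qed.

Lemma block_complex_max_face_size : max_face_size block_complex d.
Proof.
split; first by exists base; rewrite ?card_base // mem_block_complex subxx.
move=> F; rewrite mem_block_complex => /orP[Fbase | /existsP[j Fj]].
  by rewrite -card_base subset_leq_card.
by rewrite (leq_trans (subset_leq_card Fj)) // card_facet delta_le_d.
Qed.

Lemma block_complex_forest : forest block_complex.
Proof.
move=> S /subsetP S_facets S_neq0.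
have S_family X : X \in S -> X \in facet_family.
  by move=> XS; apply: (subsetP (facets_gen_complex_sub _)); apply: S_facets.
have facetsS : facets (gen_complex S) = S.
  by apply: facets_gen_complex => F G FS GS; apply: facets_antichain; apply: S_facets.
case: (pickP [pred j : 'I_s | facet j \in S]) => [j0 j0S | no_facet].
  have [j jS j_min] := arg_minnP (fun j : 'I_s => e j) j0S.
  exists (facet j); apply: (@is_leaf_core _ _ _ (core j)); rewrite facetsS //.
    by move=> H HS; apply: setI_family_facet; apply: S_family.
  move=> G GS; case: (facet_familyP (S_family G GS)) => [-> | [k Gk]].
    exact: core_sub_base.
  by rewrite Gk (subset_trans _ (core_sub_facet k)) // subset_core // j_min //= -Gk.
have S_base X : X \in S -> X = base.
  move=> XS; case: (facet_familyP (S_family X XS)) => [// | [k Xk]].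
  by move: (no_facet k); rewrite /= -Xk XS.
have [S0 | [B BS]] := set_0Vmem S; first by rewrite S0 eqxx in S_neq0.
exists base; apply: (@is_leaf_core _ _ _ base); rewrite facetsS.
- by rewrite -(S_base B BS).
- by move=> H /S_base ->; rewrite eqxx.
- by move=> G /S_base ->.
Qed.

Lemma block_complex_indicator G :
  (G \in block_complex) + \sum_(j < s) (G \subset core j) =
  (G \subset base) + \sum_(j < s) (G \subset facet j).
Proof.
rewrite mem_block_complex; have [Gbase | Gnbase] := boolP (G \subset base).
  congr (_ + _); apply: eq_bigr => j _; congr (nat_of_bool _).
  apply/idP/idP => [Gcore | Gfacet]; first exact: subset_trans Gcore (core_sub_facet j).
  by rewrite -(setI_facet_base j) subsetI Gfacet.
rewrite big1 => [|j _]; last first.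
  apply/eqP; rewrite eqb0; apply: contra Gnbase => Gcore.
  exact: subset_trans Gcore (core_sub_base j).
rewrite addn0 add0n /=; case: existsP => [[j Gj] | no_facet]; last first.
  rewrite big1 // => j _; apply/eqP; rewrite eqb0.
  by apply/negP => Gj; apply: no_facet; exists j.
rewrite (bigD1 j) //= Gj big1 // => k kj; apply/eqP; rewrite eqb0.
apply: contra Gnbase => Gk; apply: subset_trans (core_sub_base j).
by apply: subset_trans (setI_facets kj); rewrite subsetI Gk.
Qed.

Local Open Scope ring_scope.

Lemma block_complex_face_poly (R : comNzRingType) :
  \sum_(F in block_complex) 'X^#|F| =
  (1 + 'X) ^+ d + \sum_(j < s) (1 + 'X) ^+ delta j - \sum_(j < s) (1 + 'X) ^+ e j
  :> {poly R}.
Proof.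
pose weighted (w : {set 'I_n} -> nat) : {poly R} := \sum_G (w G)%:R * 'X^#|G|.
have weighted_pred (P : pred {set 'I_n}) : \sum_(G | P G) 'X^#|G| = weighted P.
  by rewrite /weighted big_mkcond; apply: eq_bigr => G _; rewrite mulr_natl mulrb.
have weighted_sum (P : 'I_s -> pred {set 'I_n}) :
    \sum_(j < s) weighted (P j) = weighted (fun G => (\sum_(j < s) P j G)%N).
  by rewrite /weighted exchange_big; apply: eq_bigr => G _; rewrite natr_sum mulr_suml.
have weightedD w1 w2 : weighted w1 + weighted w2 = weighted (fun G => (w1 G + w2 G)%N).
  by rewrite /weighted -big_split; apply: eq_bigr => G _; rewrite natrD mulrDl.
have sum_core : \sum_(j < s) (1 + 'X) ^+ e j =
                 weighted (fun G => (\sum_(j < s) (G \subset core j))%N).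
  rewrite -weighted_sum; apply: eq_bigr => j _.
  by rewrite -card_core -sum_subsets_exp_card weighted_pred.
have sum_facet : \sum_(j < s) (1 + 'X) ^+ delta j =
                  weighted (fun G => (\sum_(j < s) (G \subset facet j))%N).
  rewrite -weighted_sum; apply: eq_bigr => j _.
  by rewrite -card_facet -sum_subsets_exp_card weighted_pred.
apply/eqP; rewrite eq_sym subr_eq -card_base -sum_subsets_exp_card sum_core sum_facet.
rewrite !weighted_pred !weightedD; apply/eqP/eq_bigr => G _.
by rewrite block_complex_indicator.
Qed.

End BlockForest.

Theorem lemma2p3 (s d : nat) (delta e : nat -> nat) :
  1 <= d ->
  (forall i j, i <= s -> j < s -> delta i <> e j) ->
  0 < delta 0 ->
  (forall i, i < s -> delta i <= delta i.+1) ->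
  delta s = d ->
  (forall j, j.+1 < s -> e j <= e j.+1) ->
  (0 < s -> e s.-1 < d) ->
  (forall j, j < s -> e j < delta j) ->
  let n := (\sum_(j < s.+1) delta j - \sum_(j < s) e j)%N in
  exists D : {set {set 'I_n}},
    [/\ simplicial_complex D, forest D, max_face_size D d &
     (\sum_(i < d.+1) ((fshift D i)%:R : int) *: 'X^i =
      \sum_(j < s.+1) (1 + 'X) ^+ delta j - \sum_(j < s) (1 + 'X) ^+ e j
        :> {poly int})%R].
Proof.
move=> _ _ _ delta_homo delta_s _ _ e_lt_delta.
have delta_le_d j : j < s -> delta j <= d.
  move=> js; rewrite -delta_s.
  apply: (@homo_leq_in _ [pred i | i <= s] delta (fun a b => a <= b) leqnn leq_trans);
    rewrite ?inE ?leqnn ?(ltnW js) //.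
  - by move=> i k _ ks l /andP[_ /ltnW lk]; apply: leq_trans lk ks.
  - by move=> i _ /delta_homo.
have sum_delta : \sum_(j < s) delta j = \sum_(j < s) (delta j - e j) + \sum_(j < s) e j.
  by rewrite -big_split; apply: eq_bigr => j _; rewrite /= subnK // ltnW ?e_lt_delta.
rewrite big_ord_recr /= delta_s sum_delta addnAC addnK addnC -/(block_start d delta e s).
have [_ face_le_d] := block_complex_max_face_size e_lt_delta delta_le_d.
exists (block_complex d s delta e); split.
- exact: block_complex_simplicial.
- exact: block_complex_forest.
- exact: block_complex_max_face_size.
rewrite sum_fshift_faces ?mem_block_complex ?sub0set // block_complex_face_poly //.
by rewrite [in RHS]big_ord_recr /= delta_s (addrC _ ((1 + 'X) ^+ d)%R).
Qed.
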